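(* Fix $\theta>0$. As $N\to\infty$: - $\kappa_N(\theta)/N\to e^{-1/\theta}$; - the optimal winning probability $W(N,\kappa_N(\theta))/[N]_\theta\to 1/e$. In particular, the limit of the optimal winning probability does not depend on $\theta$.
   Context: Permutations of $\{1,\dots,N\}$ are written in one-line notation; $\mathfrak S_N$ is the set of all of them. An entry $\pi_j$ is a left-to-right maximum if $\pi_j>\pi_i$ for all $i<j$; $\mathrm{lrm}(\pi)$ is the number of left-to-right maxima. Definitions: - $[m]_\theta=\theta(\theta+1)\cdots(\theta+m-1)$; this equals $\sum_{\pi\in\mathfrak S_m}\theta^{\mathrm{lrm}(\pi)}$. - For $0\le k\le N-1$, $\pi$ is $k$-winnable if the first index $j>k$ with $\pi_j$ a left-to-right maximum has $\pi_j=N$. - $W(N,k)=\sum_{k\text{-winnable }\pi\in\mathfrak S_N}\theta^{\mathrm{lrm}(\pi)}$. - With $H_N(k)=\sum_{i=k+1}^{N-1}1/i$ for $0\le k\le N-1$, set $\kappa_N(\theta)=0$ if $\theta\le H_N(0)^{-1}$; $\kappa_N(\theta)=k$ if $H_N(k-1)^{-1}<\theta\le H_N(k)^{-1}$ for some $1\le k\le N-2$; and $\kappa_N(\theta)=N-1$ if $\theta>N-1$. $\kappa_N(\theta)$ is the number of initial rejections of an optimal strategy in the best choice game where $\pi\in\mathfrak S_N$ has probability $\theta^{\mathrm{lrm}(\pi)}/[N]_\theta$, and $W(N,\kappa_N(\theta))/[N]_\theta$ is the optimal winning probability. *)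

From mathcomp Require Import all_boot all_order all_fingroup.
From Stdlib Require Import Reals.

Set Implicit Arguments.
Unset Strict Implicit.
Unset Printing Implicit Defensive.

(* Permutations of {1,..,N} are modelled by 'S_N = {perm 'I_N}, i.e. values
   and positions 0,..,N-1 (shift by one; order-preserving). *)

Definition is_lrm (N : nat) (s : 'S_N) (j : 'I_N) : bool :=
  [forall i : 'I_N, (i < j)%N ==> (s i < s j)%N].

Definition lrm (N : nat) (s : 'S_N) : nat := #|[pred j : 'I_N | is_lrm s j]|.

(* pi is k-winnable: the first index j > k (1-based), i.e. j >= k (0-based),
   at which pi has a left-to-right maximum carries the value N (0-based: N-1). *)
Definition winnable (N k : nat) (s : 'S_N) : bool :=
  [exists j : 'I_N,
     [&& (k <= j)%N, is_lrm s j, (nat_of_ord (s j) == N.-1)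
       & [forall i : 'I_N, ((k <= i) && (i < j))%N ==> ~~ is_lrm s i]]].

Local Open Scope R_scope.

Definition W (N k : nat) (theta : R) : R :=
  foldr (fun s acc => theta ^ (lrm s) + acc) 0
        (filter (winnable k) (enum 'S_N)).

Fixpoint rising (theta : R) (m : nat) : R :=
  match m with
  | O => 1
  | S m' => rising theta m' * (theta + INR m')
  end.

(* H_N(k) = sum_{i=k+1}^{N-1} 1/i *)
Definition H (N k : nat) : R :=
  foldr (fun i acc => / INR i + acc) 0 (iota k.+1 (N.-1 - k)).

Definition Rleb (x y : R) : bool := if Rle_dec x y then true else false.
Definition Rltb (x y : R) : bool := if Rlt_dec x y then true else false.

Fixpoint kappa_search (N : nat) (theta : R) (k fuel : nat) : nat :=
  match fuel with
  | O => N.-1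
  | S f => if Rltb (/ H N k.-1) theta && Rleb theta (/ H N k) then k
           else kappa_search N theta k.+1 f
  end.

Definition kappa (N : nat) (theta : R) : nat :=
  if Rleb theta (/ H N 0) then 0%nat
  else if Rltb (INR N.-1) theta then N.-1
  else kappa_search N theta 1 (N.-2).

From Pilot Require Import Defs.
From Stdlib Require Import Reals Lra.
From mathcomp Require Import all_boot all_order all_fingroup.
From mathcomp Require Import Rstruct zify.
From Coquelicot Require Import Rbar Lim_seq.
From Coquelicot Require Hierarchy.

(* Let lrm_from k s count the left-to-right maxima of s at
   positions >= k.  Since the maximum is always a left-to-right maximum and
   nothing after it is one, s is k-winnable iff lrm_from k s = 1.  Building a
   permutation of N+1 letters by appending a last entry to one of N letters
   gives linear recursions for the θ-weighted counts Z(N,k) (no left-to-right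
   maximum from k on) and W(N,k) (exactly one), whence the exact identity
       W(N,k) / [N]_θ = θ H_N(k-1) · Z(N,k) / [N]_θ,
   where Z(N,k)/[N]_θ = Π_{n=k}^{N-1} n/(θ+n) is squeezed between
   exp(-θ H_N(k-1)) and exp(-θ H_N(k-1) + θ²/(k-1)).

   For large N, kappa_N(θ) is the threshold k with
   H_N(k) <= 1/θ < H_N(k-1); as exp H_N(k) lies between N/(k+1) and (N-1)/k,
   this forces |kappa_N(θ) - N e^{-1/θ}| <= 1, giving the first limit.  Then
   kappa_N(θ) -> oo, θ H_N(kappa-1) -> 1 and the product above tends to
   1 · e^{-1} by squeezing. *)

Set Implicit Arguments.
Unset Strict Implicit.
Unset Printing Implicit Defensive.

Lemma is_lrmP N (s : 'S_N) (j : 'I_N) :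
  reflect (forall i : 'I_N, (i < j)%N -> (s i < s j)%N) (is_lrm s j).
Proof.
apply: (iffP forallP) => H i; first by move=> lt; have/implyP := H i; apply.
by apply/implyP; apply: H.
Qed.

Definition lrm_from N k (s : 'S_N) : nat :=
  #|[pred j : 'I_N | (k <= j)%N && is_lrm s j]|.

(* The position top of the largest value is a left-to-right maximum, the last
   one; so winnability only depends on lrm_from. *)
Section TopPosition.
Variables (n : nat) (s : 'S_n.+1).
Let top := (s^-1)%g ord_max.

Lemma s_top_value (j : 'I_n.+1) : (nat_of_ord (s j) == n) = (j == top).
Proof.
rewrite -[n]/(nat_of_ord (@ord_max n)) (inj_eq val_inj).
by rewrite -(inj_eq (@perm_inj _ s^-1)) permK.
Qed.

Lemma lrm_top : is_lrm s top.
Proof.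
apply/is_lrmP => i lt_i_top; rewrite permKV ltn_neqAle -ltnS ltn_ord andbT.
by rewrite s_top_value; apply: contraTneq lt_i_top => ->; rewrite ltnn.
Qed.

Lemma not_lrm_after_top (i : 'I_n.+1) : (top < i)%N -> ~~ is_lrm s i.
Proof.
by move=> lt_top_i; apply/is_lrmP => /(_ top lt_top_i); rewrite permKV ltnNge -ltnS ltn_ord.
Qed.

Lemma winnable_lrm_from k : winnable k s = (lrm_from k s == 1%N).
Proof.
apply/existsP/idP => [[x /and4P [k_x lrm_x /= /eqP/eqP]] | ].
  rewrite s_top_value => /eqP x_top /forallP no_lrm_before.
  apply/eqP/(@eq_card1 _ x) => i; rewrite !inE.
  case: (ltngtP i x) => [lt_i_x | lt_x_i | /val_inj ->]; last by rewrite k_x lrm_x eqxx.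
  - rewrite -(inj_eq val_inj) /= (ltn_eqF lt_i_x).
    by have := no_lrm_before i; rewrite lt_i_x andbT; case: (k <= i)%N => //= /negbTE.
  - rewrite -(inj_eq val_inj) /= (gtn_eqF lt_x_i).
    by rewrite x_top in lt_x_i; rewrite (negbTE (not_lrm_after_top lt_x_i)) andbF.
case/card1P => x only_x; have := only_x x; rewrite !inE eqxx => /andP [k_x lrm_x].
have x_top : x = top.
  case: (leqP k top) => [k_top | top_k].
    by have := only_x top; rewrite !inE k_top lrm_top => /esym/eqP.
  case: (ltngtP x top) => [lt_x_top | lt_top_x | /val_inj //].
  - by move: (leq_trans k_x (ltnW lt_x_top)); rewrite leqNgt top_k.
  - by move: lrm_x; rewrite (negbTE (not_lrm_after_top lt_top_x)).
exists x; rewrite k_x lrm_x /= s_top_value x_top eqxx /=.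
apply/forallP => i; apply/implyP => /andP [k_i lt_i_x]; apply/negP => lrm_i.
have := only_x i; rewrite !inE k_i lrm_i /= => /esym/eqP i_x.
by move: lt_i_x; rewrite i_x x_top ltnn.
Qed.
End TopPosition.

Lemma card_split_last n (P : pred 'I_n.+1) :
  #|P| = (#|[pred k : 'I_n | P (lift ord_max k)]| + P ord_max)%N.
Proof.
rewrite -!sum1_card !(big_mkcond (fun i => i \in _)) big_ord_recr; congr addn.
apply: eq_bigr => i _; rewrite !inE (_ : widen_ord _ i = lift ord_max i) //.
by apply: val_inj; rewrite /= /bump leqNgt ltn_ord.
Qed.

(* A permutation of 'I_n.+1 is obtained from one of 'I_n by choosing the value
   j of its last entry: [lift_perm ord_max j s]. *)
Section AppendLast.
Variables (n : nat) (j : 'I_n.+1) (s : 'S_n).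
Let p := lift_perm ord_max j s.

Lemma lrm_append_last : is_lrm p ord_max = (j == ord_max).
Proof.
have p_last : p ord_max = j by rewrite /p lift_perm_id.
apply/is_lrmP/eqP => [all_below | j_last].
  rewrite -p_last; set i := (p^-1)%g ord_max.
  have p_i : p i = ord_max by rewrite permKV.
  case: (eqVneq i ord_max) => [i_last | i_not_last]; first by rewrite -{1}i_last p_i.
  have lt_i_last : (i < @ord_max n)%N.
    by rewrite ltn_neqAle -ltnS ltn_ord andbT; apply: contra i_not_last => /eqP/val_inj ->.
  by have := all_below i lt_i_last; rewrite p_i ltnNge leq_ord.
move=> i lt_i_last.
have i_not_last : i != ord_max by apply: contraTneq lt_i_last => ->; rewrite ltnn.
by rewrite ltn_neqAle (inj_eq val_inj) (inj_eq (@perm_inj _ p)) i_not_last p_last j_last leq_ord.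
Qed.

Lemma lrm_append_low (k : 'I_n) : is_lrm p (lift ord_max k) = is_lrm s k.
Proof.
have lift_last (i : 'I_n) : (lift (@ord_max n) i : nat) = i by apply: lift_max.
have lift_mono (a b : 'I_n) : (lift j a < lift j b)%N = (a < b)%N.
  by rewrite /= /bump; case: leqP; case: leqP => *; lia.
apply/is_lrmP/is_lrmP => all_below i lt_i_k.
  by have := all_below (lift ord_max i); rewrite !lift_last lt_i_k /p !lift_perm_lift lift_mono; apply.
case: (unliftP ord_max i) => [i' i_def | i_last]; last first.
  by move: lt_i_k; rewrite i_last lift_last ltnNge ltnW.
rewrite i_def /p !lift_perm_lift lift_mono; apply: all_below.
by move: lt_i_k; rewrite i_def !lift_last.
Qed.
End AppendLast.

Lemma lrm_append n (j : 'I_n.+1) (s : 'S_n) :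
  lrm (lift_perm ord_max j s) = (lrm s + (j == ord_max))%N.
Proof.
rewrite /lrm card_split_last /= lrm_append_last; congr addn.
by apply: eq_card => i; rewrite !inE lrm_append_low.
Qed.

Lemma lrm_from_append n k (j : 'I_n.+1) (s : 'S_n) :
  lrm_from k (lift_perm ord_max j s) = (lrm_from k s + ((k <= n) && (j == ord_max)))%N.
Proof.
rewrite /lrm_from card_split_last /= lrm_append_last; congr addn.
by apply: eq_card => i; rewrite !inE lrm_append_low /bump (leqNgt n i) ltn_ord.
Qed.

Local Open Scope R_scope.

Lemma sum_perm_append n (F : 'S_n.+1 -> R) :
  \big[Rplus/0]_(q : 'S_n.+1) F q =
  \big[Rplus/0]_(j : 'I_n.+1) \big[Rplus/0]_(s : 'S_n) F (lift_perm ord_max j s).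
Proof.
rewrite (partition_big (fun q : 'S_n.+1 => q ord_max) xpredT) //=.
apply: eq_bigr => j0 _; set i0 := (@ord_max n).
rewrite (reindex (lift_perm i0 j0)); last first.
  pose ulsf i (s : 'S_n.+1) k := odflt k (unlift (s i) (s (lift i k))).
  have ulsfK i (s : 'S_n.+1) k : lift (s i) (ulsf i s k) = s (lift i k).
    rewrite /ulsf; have := neq_lift i k.
    by rewrite -(can_eq (permK s)) => /unlift_some[] ? ? ->.
  have inj_ulsf : injective (ulsf i0 _).
    move=> s; apply: can_inj (ulsf (s i0) s^-1%g) _ => k'.
    by rewrite {1}/ulsf ulsfK !permK liftK.
  exists (fun s => perm (inj_ulsf s)) => [s _ | s].
    by apply/permP => k'; rewrite permE /ulsf lift_perm_lift lift_perm_id liftK.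
  move/(s _ =P _) => si0; apply/permP => k.
  case: (unliftP i0 k) => [k'|] ->; rewrite ?lift_perm_id //.
  by rewrite lift_perm_lift -si0 permE ulsfK.
by apply: eq_bigl => s; rewrite lift_perm_id eqxx.
Qed.

Lemma foldr_Rplus_big (T : Type) (f : T -> R) (l : seq T) :
  foldr (fun s acc => f s + acc) 0 l = \big[Rplus/0]_(s <- l) f s.
Proof. by elim: l => [|a l IH] /=; rewrite ?big_nil ?big_cons ?IH. Qed.

Lemma iter_Rplus n c : iter n (Rplus c) 0 = INR n * c.
Proof. elim: n => [|n IH]; first by rewrite /=; lra. by rewrite iterS IH S_INR; lra. Qed.

Lemma card_ord0 (P : pred 'I_0) : #|P| = 0%N.
Proof. by apply/eqP; rewrite -leqn0; have := max_card P; rewrite card_ord. Qed.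

(* For c = 1 this is W (Lemma [W_lrm_weight]); for
   c = 0 it is the weight of the permutations whose maximum lies in the first
   k positions. *)
Section LrmWeights.
Variable theta : R.

Definition lrm_weight (c n k : nat) : R :=
  \big[Rplus/0]_(s : 'S_n | lrm_from k s == c) theta ^ lrm s.

Lemma W_lrm_weight N k : W N k theta = lrm_weight 1 N k.
Proof.
rewrite /W foldr_Rplus_big big_filter big_enum_cond /lrm_weight.
case: N => [|n] in k *; last by apply: eq_bigl => s; rewrite winnable_lrm_from.
apply: eq_bigl => s; rewrite /lrm_from card_ord0.
by apply/existsP => -[[]].
Qed.

(* Appending the last entry: it is a new left-to-right maximum (weight θ)
   for exactly one of the n+1 choices of its value, and it lies in the
   observed window iff k <= n. *)
Lemma lrm_weight_succ c n k : lrm_weight c n.+1 k =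
  INR n * lrm_weight c n k +
  theta * \big[Rplus/0]_(s : 'S_n | (lrm_from k s + (k <= n)%N)%N == c) theta ^ lrm s.
Proof.
rewrite /lrm_weight big_mkcond sum_perm_append big_ord_recr /=; congr Rplus.
  rewrite (eq_bigr (fun _ => lrm_weight c n k)) ?big_const_ord ?iter_Rplus //.
  move=> i _; rewrite /lrm_weight [in RHS]big_mkcond; apply: eq_bigr => s _.
  rewrite lrm_from_append lrm_append.
  have -> : (widen_ord (leqnSn n) i == ord_max) = false.
    by apply/negbTE; rewrite -(inj_eq val_inj) /= ltn_eqF.
  by rewrite andbF !addn0.
rewrite big_distrr [in RHS]big_mkcond /=; apply: eq_bigr => s _.
by rewrite lrm_from_append lrm_append eqxx andbT pow_add /=; case: ifP => _; lra.
Qed.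

Lemma lrm_weight0_succ_late n k : (k <= n)%N ->
  lrm_weight 0 n.+1 k = INR n * lrm_weight 0 n k.
Proof.
move=> le_k_n; rewrite lrm_weight_succ le_k_n (eq_bigl xpred0) ?big_pred0_eq; first lra.
by move=> s; rewrite addn1.
Qed.

Lemma lrm_weight1_succ_late n k : (k <= n)%N ->
  lrm_weight 1 n.+1 k = INR n * lrm_weight 1 n k + theta * lrm_weight 0 n k.
Proof.
move=> le_k_n; rewrite lrm_weight_succ le_k_n /lrm_weight.
by under [X in theta * X]eq_bigl => s do rewrite addn1 eqSS.
Qed.

Lemma lrm_weight_succ_early c n k : (n < k)%N ->
  lrm_weight c n.+1 k = (INR n + theta) * lrm_weight c n k.
Proof.
move=> lt_n_k; rewrite lrm_weight_succ leqNgt lt_n_k /= /lrm_weight.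
by under [X in theta * X]eq_bigl => s do rewrite addn0; rewrite Rmult_plus_distr_r.
Qed.

(* Before the window nothing can be observed: every permutation counts in c = 0. *)
Lemma lrm_weight_prefix n k : (n <= k)%N ->
  lrm_weight 0 n k = rising theta n /\ lrm_weight 1 n k = 0.
Proof.
elim: n => [|n IH] le_n_k.
  have lrm_from0 (s : 'S_0) : lrm_from k s = 0%N by rewrite /lrm_from card_ord0.
  split; last by rewrite /lrm_weight (eq_bigl xpred0) ?big_pred0_eq // => s; rewrite lrm_from0.
  rewrite /lrm_weight (eq_bigl xpredT) => [|s]; last by rewrite lrm_from0.
  rewrite (eq_bigr (fun _ => 1)) => [|s _]; last by rewrite /lrm card_ord0.
  by rewrite big_const card_Sn /=; lra.
rewrite !lrm_weight_succ_early //; have [-> ->] := IH (ltnW le_n_k).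
by split; rewrite /=; ring.
Qed.

End LrmWeights.

Lemma foldr_inv_acc (l : seq nat) x :
  foldr (fun i acc => / INR i + acc) x l = foldr (fun i acc => / INR i + acc) 0 l + x.
Proof. by elim: l => [|a l IH] /=; [lra | rewrite IH; lra]. Qed.

Lemma H_succ N k : (k < N)%N -> H N.+1 k = H N k + / INR N.
Proof.
case: N => [|N] // lt_k_N; rewrite /H succnK.
rewrite (_ : (N.+1 - k = (N - k) + 1)%N); last by lia.
rewrite iotaD foldr_cat (_ : iota _ 1 = [:: N.+1]) /=; last by congr (_ :: _); lia.
by rewrite foldr_inv_acc; lra.
Qed.

Lemma H_pred N k : (0 < k)%N -> (k < N)%N -> H N k.-1 = / INR k + H N k.
Proof.
move=> k_gt0 lt_k_N; rewrite /H prednK //.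
by rewrite (_ : (N.-1 - k.-1 = (N.-1 - k).+1)%N); last by lia.
Qed.

Lemma H_nil N k : (N <= k.+1)%N -> H N k = 0.
Proof. by move=> le_N_k; rewrite /H (_ : (N.-1 - k = 0)%N) //; lia. Qed.

Lemma lrm_weight1_formula theta N k : (0 < k)%N -> (k <= N)%N ->
  lrm_weight theta 1 N k = theta * H N k.-1 * lrm_weight theta 0 N k.
Proof.
move=> k_gt0 /subnKC <-; elim: (N - k)%N => [|d IH].
  by rewrite addn0 (lrm_weight_prefix _ (leqnn k)).2 H_nil ?prednK //; lra.
have le_k_kd : (k <= k + d)%N by apply: leq_addr.
rewrite addnS lrm_weight1_succ_late // lrm_weight0_succ_late // IH H_succ; last by lia.
have kd_neq0 : INR (k + d) <> 0 by apply: not_0_INR; lia.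
by field.
Qed.

Lemma exp_le x y : x <= y -> exp x <= exp y.
Proof. by case=> [/exp_increasing/Rlt_le | ->]; [| right]. Qed.

Lemma exp_le_inv_one_minus x : x < 1 -> exp x <= / (1 - x).
Proof.
move=> lt_x_1; have := exp_ineq1_le (- x); rewrite exp_Ropp => le_inv.
rewrite -(Rinv_inv (exp x)); apply: Rinv_le_contravar => //; lra.
Qed.

Lemma INR_ge2 n : (2 <= n)%N -> 2 <= INR n.
Proof. by move=> /leP/le_INR; rewrite /=; lra. Qed.

(* Bounds for the factor n/(θ+n) by which inserting a new last entry (not a
   left-to-right maximum) changes a probability. *)
Lemma factor_exp_bounds theta n : 0 < theta -> 2 <= n ->
  exp (- (theta / n)) <= n / (theta + n) <=
  exp (- (theta / n) + theta ^ 2 * (/ (n - 1) - / n)).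
Proof.
move=> theta_gt0 n_ge2; split.
  have ratio_pos : 0 < theta / n by apply: Rdiv_lt_0_compat; lra.
  have := exp_le_inv_one_minus (ltac:(lra) : - (theta / n) < 1).
  by rewrite (_ : / (1 - - (theta / n)) = n / (theta + n)) //; field; lra.
set x := theta / (theta + n).
have -> : n / (theta + n) = 1 - x by rewrite /x; field; lra.
apply: (Rle_trans _ (exp (- x))); first by have := exp_ineq1_le (- x); lra.
apply: exp_le; rewrite /x.
have -> : - (theta / (theta + n)) = - (theta / n) + theta ^ 2 * (/ n * / (theta + n)).
  by field; lra.
have -> : / (n - 1) - / n = / n * / (n - 1) by field; lra.
apply/Rplus_le_compat_l/Rmult_le_compat_l; first by apply: pow2_ge_0.
apply/Rmult_le_compat_l; first by left; apply: Rinv_0_lt_compat; lra.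
by apply: Rinv_le_contravar; lra.
Qed.

Lemma H_exp_lower N k : (k < N)%N -> INR N / INR k.+1 <= exp (H N k).
Proof.
have k1_pos : 0 < INR k.+1 by apply: lt_0_INR; apply/ltP.
move=> /subnKC <-; elim: (N - k.+1)%N => [|d IH].
  by rewrite addn0 H_nil // exp_0 /Rdiv Rinv_r //; lra.
rewrite addnS H_succ; last by lia.
rewrite exp_plus S_INR; set m := INR (k.+1 + d) in IH *.
have m_pos : 0 < m by apply: lt_0_INR; apply/ltP; lia.
have := exp_ineq1_le (/ m) => exp_lower.
have -> : (m + 1) / INR k.+1 = m / INR k.+1 * (1 + / m) by field; lra.
have inv_m_pos := Rinv_0_lt_compat _ m_pos.
by apply: Rmult_le_compat => //; [apply: Rle_mult_inv_pos | ..]; lra.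
Qed.

Lemma H_exp_upper N k : (0 < k)%N -> (k < N)%N -> exp (H N k) <= (INR N - 1) / INR k.
Proof.
move=> k_gt0; have k_pos : 0 < INR k by apply: lt_0_INR; apply/ltP.
move=> /subnKC <-; elim: (N - k.+1)%N => [|d IH].
  by rewrite addn0 H_nil // exp_0 S_INR (_ : INR k + 1 - 1 = INR k) ?/Rdiv ?Rinv_r; lra.
rewrite addnS H_succ; last by lia.
rewrite exp_plus S_INR; set m := INR (k.+1 + d) in IH *.
have m_ge2 : 2 <= m by apply: INR_ge2; lia.
have exp_upper : exp (/ m) <= m / (m - 1).
  rewrite (_ : m / (m - 1) = / (1 - / m)); last by field; lra.
  by apply: exp_le_inv_one_minus; have := Rinv_le_contravar 2 m; lra.
have -> : (m + 1 - 1) / INR k = (m - 1) / INR k * (m / (m - 1)) by field; lra.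
by apply: Rmult_le_compat => //; left; apply: exp_pos.
Qed.

Lemma H_pos N k : (k.+1 < N)%N -> 0 < H N k.
Proof.
move=> lt_k1_N; have := H_exp_lower (ltnW lt_k1_N).
have : 1 < INR N / INR k.+1.
  have k1_pos : 0 < INR k.+1 by apply: lt_0_INR; apply/ltP.
  have := lt_INR _ _ (elimT ltP lt_k1_N).
  by move=> lt; apply: (Rmult_lt_reg_r (INR k.+1)) => //; rewrite /Rdiv Rmult_assoc Rinv_l; lra.
by move=> gt1 le; apply: exp_lt_inv; rewrite exp_0; lra.
Qed.

Section PrefixMaximum.
Variable theta : R.
Hypothesis theta_pos : 0 < theta.

Lemma rising_pos n : 0 < rising theta n.
Proof.
elim: n => [|n IH] /=; first lra.
by apply: Rmult_lt_0_compat => //; have := pos_INR n; lra.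
Qed.

(* The θ-probability that no left-to-right maximum occurs at positions >= k,
   i.e. that the maximum of a random permutation of 'I_N lies among its first
   k entries. *)
Definition prefix_max_prob N k := lrm_weight theta 0 N k / rising theta N.

Lemma prefix_max_prob_succ n k : (k <= n)%N ->
  prefix_max_prob n.+1 k = prefix_max_prob n k * (INR n / (theta + INR n)).
Proof.
move=> le_k_n; rewrite /prefix_max_prob lrm_weight0_succ_late //=.
have := rising_pos n; have := pos_INR n => *; field; lra.
Qed.

(* Multiplying the factor bounds of [factor_exp_bounds] along n = k, ..., N-1;
   the exponents telescope to the harmonic tail H N (k-1). *)
Lemma prefix_max_prob_bounds N k : (2 <= k)%N -> (k <= N)%N ->
  exp (- (theta * H N k.-1)) <= prefix_max_prob N k <=
  exp (- (theta * H N k.-1) + theta ^ 2 * (/ (INR k - 1) - / (INR N - 1))).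
Proof.
move=> k_ge2 /subnKC <-; elim: (N - k)%N => [|d [IHlow IHup]].
  rewrite addn0 H_nil; last by rewrite prednK // ltnW.
  rewrite /prefix_max_prob (lrm_weight_prefix _ (leqnn k)).1 /Rdiv Rinv_r.
    by rewrite Rmult_0_r Ropp_0 Rminus_diag Rmult_0_r Rplus_0_r exp_0; lra.
  by apply: Rgt_not_eq; apply: rising_pos.
have le_k_kd : (k <= k + d)%N by apply: leq_addr.
rewrite addnS prefix_max_prob_succ // H_succ; last by lia.
rewrite S_INR; set m := INR (k + d) in IHlow IHup *.
have m_ge2 : 2 <= m by apply: INR_ge2; lia.
have [f_low f_up] := factor_exp_bounds theta_pos m_ge2.
have rho_pos : 0 <= prefix_max_prob (k + d) k.
  by apply: Rle_trans IHlow; left; apply: exp_pos.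
split.
  rewrite (_ : - (theta * (H (k + d) k.-1 + / m)) =
               - (theta * H (k + d) k.-1) + - (theta / m)); last by rewrite /Rdiv; ring.
  by rewrite exp_plus; apply: Rmult_le_compat => //; left; apply: exp_pos.
rewrite (_ : - (theta * (H (k + d) k.-1 + / m)) + theta ^ 2 * (/ (INR k - 1) - / (m + 1 - 1)) =
             (- (theta * H (k + d) k.-1) + theta ^ 2 * (/ (INR k - 1) - / (m - 1))) +
             (- (theta / m) + theta ^ 2 * (/ (m - 1) - / m))); last first.
  by rewrite (_ : m + 1 - 1 = m); [rewrite /Rdiv; ring | ring].
rewrite exp_plus; apply: Rmult_le_compat => //.
by apply: Rle_mult_inv_pos; lra.
Qed.

Lemma win_probability_factor N k : (0 < k)%N -> (k <= N)%N ->
  W N k theta / rising theta N = theta * H N k.-1 * prefix_max_prob N k.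
Proof.
move=> k_gt0 le_k_N; rewrite W_lrm_weight lrm_weight1_formula //.
by rewrite /prefix_max_prob /Rdiv; ring.
Qed.

End PrefixMaximum.

Definition is_threshold (N : nat) (theta : R) (k : nat) : Prop :=
  [/\ (0 < k)%N, (k.+1 < N)%N, H N k <= / theta & / theta < H N k.-1].

Lemma is_threshold_inv N theta k : 0 < theta -> (0 < k)%N -> (k.+1 < N)%N ->
  / H N k.-1 < theta -> theta <= / H N k -> is_threshold N theta k.
Proof.
move=> theta_pos k_gt0 lt_k1_N lt_prev le_cur.
have H_gt0 : 0 < H N k by apply: H_pos.
have Hprev_gt0 : 0 < H N k.-1 by apply: H_pos; lia.
split=> //.
  by rewrite -(Rinv_inv (H N k)); apply: Rinv_le_contravar theta_pos le_cur.
rewrite -(Rinv_inv (H N k.-1)); apply: Rinv_lt_contravar => //.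
by apply: Rmult_lt_0_compat => //; apply: Rinv_0_lt_compat.
Qed.

Lemma kappa_search_threshold N theta : 0 < theta -> forall fuel k,
  (0 < k)%N -> (k + fuel)%N = N.-1 ->
  / H N k.-1 < theta -> theta <= INR N.-1 ->
  is_threshold N theta (kappa_search N theta k fuel).
Proof.
move=> theta_pos; elim=> [|fuel IH] k k_gt0 k_fuel lt_prev le_last /=.
  rewrite addn0 in k_fuel; exfalso.
  rewrite H_pred ?H_nil ?Rplus_0_r ?Rinv_inv ?k_fuel in lt_prev; try lia; lra.
rewrite /Defs.Rltb /Defs.Rleb; case: (Rlt_dec (/ H N k.-1) theta) => [_|//] /=.
case: (Rle_dec theta (/ H N k)) => [le_cur|lt_cur] /=; first by apply: is_threshold_inv => //; lia.
by apply: IH => //=; [lia | lra].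
Qed.

Lemma eventually_INR_gt (M : R) : Hierarchy.eventually (fun N => M < INR N).
Proof. exact: (proj2 (is_lim_seq_spec _ _) is_lim_seq_INR M). Qed.

(* For N large the two boundary cases of kappa are excluded: 1/θ < H_N(0)
   (as H_N(0) ~ ln N) and θ <= N-1. *)
Lemma kappa_threshold theta : 0 < theta ->
  Hierarchy.eventually (fun N => is_threshold N theta (kappa N theta)).
Proof.
move=> theta_pos.
apply: Hierarchy.filter_imp (eventually_INR_gt (Rmax (exp (/ theta)) (theta + 2))) => N.
move=> /Rmax_Rlt [N_exp N_theta].
have N_gt2 : (2 < N)%N by apply/ltP/INR_lt; rewrite /=; lra.
have H0_large : / theta < H N 0.
  have N_gt0 : (0 < N)%N by lia.
  apply: exp_lt_inv; apply: Rlt_le_trans (H_exp_lower N_gt0).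
  by rewrite /= /Rdiv Rinv_1 Rmult_1_r.
have first_fails : / H N 0 < theta.
  rewrite -(Rinv_inv theta); apply: Rinv_lt_contravar => //.
  by apply: Rmult_lt_0_compat => //; have := Rinv_0_lt_compat _ theta_pos; lra.
have last_fails : theta <= INR N.-1.
  by rewrite -(prednK (ltnW (ltnW N_gt2))) S_INR /= in N_theta; lra.
rewrite /kappa /Defs.Rleb /Defs.Rltb.
case: Rle_dec => [|_] /=; first lra.
case: Rlt_dec => [|_] /=; first lra.
by apply: kappa_search_threshold => //; lia.
Qed.

(* Since H_N(k) ~ ln(N/k), the threshold satisfies k = N e^{-1/θ} + O(1). *)
Lemma threshold_near N theta k : 0 < theta -> is_threshold N theta k ->
  INR N * exp (- / theta) - 1 <= INR k <= INR N * exp (- / theta) + 1.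
Proof.
move=> theta_pos [k_gt0 lt_k1_N H_le H_gt].
have inv_exp : exp (/ theta) * exp (- / theta) = 1 by rewrite -exp_plus Rplus_opp_r exp_0.
have c_pos := exp_pos (- / theta); have N_pos := pos_INR N.
have k1_pos : 0 < INR k.+1 by apply: lt_0_INR; apply/ltP.
split.
  have := Rle_trans _ _ _ (H_exp_lower (ltnW lt_k1_N)) (exp_le H_le).
  rewrite S_INR in k1_pos * => /(Rmult_le_compat_r _ _ _ (Rlt_le _ _ k1_pos)).
  rewrite /Rdiv Rmult_assoc Rinv_l; last lra.
  by move=> /(Rmult_le_compat_r _ _ _ (Rlt_le _ _ c_pos)); nra.
have [k_eq1 | k_ge2] := leqP k 1.
  by rewrite (_ : k = 1%N) /=; [nra | lia].
have upper : exp (H N k.-1) <= (INR N - 1) / INR k.-1 by apply: H_exp_upper; lia.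
have k1_INR : INR k.-1 = INR k - 1 by rewrite -{2}(prednK k_gt0) S_INR; ring.
have km1_pos : 0 < INR k - 1 by rewrite -k1_INR; apply: lt_0_INR; apply/ltP; lia.
have := Rlt_le_trans _ _ _ (exp_increasing _ _ H_gt) upper.
rewrite k1_INR => /(Rmult_lt_compat_r _ _ _ km1_pos).
rewrite /Rdiv Rmult_assoc Rinv_l; last lra.
by move=> /(Rmult_lt_compat_r _ _ _ c_pos); nra.
Qed.

Lemma threshold_H_bounds N theta k : 0 < theta -> is_threshold N theta k ->
  1 < theta * H N k.-1 <= 1 + theta / INR k.
Proof.
move=> theta_pos [k_gt0 lt_k1_N H_le H_gt].
have theta_inv : theta * / theta = 1 by apply: Rinv_r; lra.
split; first by rewrite -theta_inv; apply: Rmult_lt_compat_l.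
rewrite H_pred //; last by lia.
by have := Rmult_le_compat_l _ _ _ (Rlt_le _ _ theta_pos) H_le; rewrite /Rdiv; lra.
Qed.

Lemma inv_INR_limit : is_lim_seq (fun N => / INR N) 0.
Proof. exact: (is_lim_seq_inv _ _ is_lim_seq_INR). Qed.

Lemma exp_limit (u : nat -> R) (l : R) :
  is_lim_seq u l -> is_lim_seq (fun n => exp (u n)) (exp l).
Proof. exact/is_lim_seq_continuous/derivable_continuous_pt/derivable_pt_exp. Qed.

Section Asymptotics.
Variable theta : R.
Hypothesis theta_pos : 0 < theta.

Lemma kappa_ratio_limit :
  is_lim_seq (fun N => INR (kappa N theta) / INR N) (exp (- / theta)).
Proof.
set c := exp (- / theta).
apply: (is_lim_seq_le_le_loc (fun N => c - / INR N) _ (fun N => c + / INR N)).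
- apply: Hierarchy.filter_imp (kappa_threshold theta_pos) => N threshold.
  have [near_low near_up] := threshold_near theta_pos threshold.
  have N_pos : 0 < INR N by case: threshold => *; apply: lt_0_INR; apply/ltP; lia.
  rewrite (_ : c - / INR N = (INR N * c - 1) / INR N); last by field; lra.
  rewrite (_ : c + / INR N = (INR N * c + 1) / INR N); last by field; lra.
  by split; apply: Rmult_le_compat_r => //; left; apply: Rinv_0_lt_compat.
- by have := is_lim_seq_minus' _ _ _ _ (is_lim_seq_const c) inv_INR_limit; rewrite Rminus_0_r.
- by have := is_lim_seq_plus' _ _ _ _ (is_lim_seq_const c) inv_INR_limit; rewrite Rplus_0_r.
Qed.

Lemma kappa_unbounded : is_lim_seq (fun N => INR (kappa N theta)) p_infty.
Proof.
apply/is_lim_seq_spec => M; set c := exp (- / theta).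
have c_pos : 0 < c by apply: exp_pos.
apply: Hierarchy.filter_imp
  (Hierarchy.filter_and _ _ (kappa_threshold theta_pos) (eventually_INR_gt ((M + 1) / c))).
move=> N [threshold N_large].
have [near_low _] := threshold_near theta_pos threshold; rewrite -/c in near_low.
have := Rmult_lt_compat_r _ _ _ c_pos N_large.
by rewrite /Rdiv Rmult_assoc Rinv_l; lra.
Qed.

Lemma inv_kappa_limit : is_lim_seq (fun N => / (INR (kappa N theta) - 1)) 0.
Proof.
apply: (is_lim_seq_inv _ p_infty) => //.
exact: (is_lim_seq_minus _ _ _ _ _ kappa_unbounded (is_lim_seq_const 1)).
Qed.

Lemma kappa_eventually : Hierarchy.eventually
  (fun N => is_threshold N theta (kappa N theta) /\ (1 < kappa N theta)%N).
Proof.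
apply: Hierarchy.filter_and (kappa_threshold theta_pos) _.
apply: Hierarchy.filter_imp (proj2 (is_lim_seq_spec _ _) kappa_unbounded 1) => N.
by move=> K_gt1; apply/ltP/INR_lt.
Qed.

(* θ H_N(kappa-1) -> 1, since it lies in (1, 1 + θ/kappa]. *)
Lemma threshold_factor_limit :
  is_lim_seq (fun N => theta * H N (kappa N theta).-1) 1.
Proof.
apply: (is_lim_seq_le_le_loc (fun=> 1) _ (fun N => 1 + theta * / (INR (kappa N theta) - 1))).
- apply: Hierarchy.filter_imp kappa_eventually => N [threshold k_ge2].
  have [low up] := threshold_H_bounds theta_pos threshold.
  have k_ge2R : 2 <= INR (kappa N theta) by apply: INR_ge2.
  split; first lra.
  apply: Rle_trans up _; apply/Rplus_le_compat_l/Rmult_le_compat_l; first lra.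
  by apply: Rinv_le_contravar; lra.
- exact: is_lim_seq_const.
- have := is_lim_seq_plus' _ _ _ _ (is_lim_seq_const 1)
    (is_lim_seq_mult' _ _ _ _ (is_lim_seq_const theta) inv_kappa_limit).
  by rewrite Rmult_0_r Rplus_0_r.
Qed.

Lemma prefix_max_limit :
  is_lim_seq (fun N => prefix_max_prob theta N (kappa N theta)) (exp (-1)).
Proof.
set p := fun N => theta * H N (kappa N theta).-1.
set e := fun N => theta ^ 2 * / (INR (kappa N theta) - 1).
have opp_p_limit : is_lim_seq (fun N => - p N) (-1).
  exact: (is_lim_seq_opp _ 1).1 threshold_factor_limit.
have e_limit : is_lim_seq e 0.
  have := is_lim_seq_mult' _ _ _ _ (is_lim_seq_const (theta ^ 2)) inv_kappa_limit.
  by rewrite Rmult_0_r.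
apply: (is_lim_seq_le_le_loc (fun N => exp (- p N)) _ (fun N => exp (- p N + e N))).
- apply: Hierarchy.filter_imp kappa_eventually => N [[_ lt_k1_N _ _] k_ge2].
  have [low up] := prefix_max_prob_bounds theta_pos k_ge2 (ltnW (ltnW lt_k1_N)).
  split=> //; apply: Rle_trans up _; apply/exp_le/Rplus_le_compat_l/Rmult_le_compat_l.
    exact: pow2_ge_0.
  have N_gt1 : 1 < INR N by apply: lt_1_INR; apply/ltP; lia.
  by have := Rinv_0_lt_compat (INR N - 1); lra.
- exact: exp_limit opp_p_limit.
- by have := exp_limit (is_lim_seq_plus' _ _ _ _ opp_p_limit e_limit); rewrite Rplus_0_r.
Qed.

End Asymptotics.

Theorem mainTheorem11 (theta : R) (Htheta : 0 < theta) :
  Un_cv (fun N => INR (kappa N theta) / INR N) (exp (- / theta)) /\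
  Un_cv (fun N => W N (kappa N theta) theta / rising theta N) (exp (-1)).
Proof.
split; apply/is_lim_seq_Reals; first exact: kappa_ratio_limit.
apply: (is_lim_seq_ext_loc (fun N =>
  theta * H N (kappa N theta).-1 * prefix_max_prob theta N (kappa N theta))).
  apply: Hierarchy.filter_imp (kappa_eventually Htheta) => N [[k_gt0 lt_k1_N _ _] _].
  by rewrite win_probability_factor //; lia.
rewrite -[exp (-1)]Rmult_1_l.
exact: is_lim_seq_mult' (threshold_factor_limit Htheta) (prefix_max_limit Htheta).
Qed.
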